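(* Let $p\ge3$ and $k\ge1$ be integers, $Q=2^{p-1}$, and for $1\le j\le k$ let $g_j(\alpha)=j\alpha^{p-1}-(k-j+1)-(j-1)(1+\alpha)^{p-1}$. Then for every integer $j$ with $k^{\frac1{p-1}}+1\le j\le k$ we have $g_j\big(Q(j-1)\big)>0$. Consequently the smallest positive root $a_j$ of $g_j$ satisfies $a_j<2^{p-1}(j-1)$ for such $j$. *)

From Stdlib Require Import Reals Lra Lia.
Open Scope R_scope.

Definition Q (p : nat) : R := 2 ^ (p - 1).

(* g_j(alpha) = j alpha^(p-1) - (k - j + 1) - (j - 1) (1 + alpha)^(p-1),
   with the integer coefficients computed in R (no truncated subtraction). *)
Definition g (p k j : nat) (a : R) : R :=
  INR j * a ^ (p - 1) - (INR k - INR j + 1) - (INR j - 1) * (1 + a) ^ (p - 1).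

Definition smallest_pos_root (f : R -> R) (a : R) : Prop :=
  0 < a /\ f a = 0 /\ (forall b, 0 < b -> f b = 0 -> a <= b).

(* Write n = p - 1 >= 2, m = j - 1 and a = 2^n m = Q (j - 1).  Since j >= k^(1/n) + 1
   we have m >= 1 and k <= m^n, and with j = m + 1,
        g_j(a) = (m + 1) a^n - (k - m) - m (1 + a)^n.
   Factoring a^n out of (1 + a)^n and bounding (1 + 1/a)^n <= 1 + n/a + (n/a)^2
   (valid since n/a <= 1/2) gives m (1 + a)^n <= (m + 3/4) a^n, hence
        g_j(a) >= a^n / 4 - k + m >= m^n - k + m > 0,   using a^n >= 4 m^n.
   For the root: g_j is continuous with g_j(0) = -k < 0 and g_j(a) > 0, so the
   supremum of the points x such that g_j < 0 on [0, x] is the smallest positive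
   root, and it lies strictly below a. *)
From Stdlib Require Import Reals Lra Lia Classical.
Open Scope R_scope.

Lemma pow_one_plus_le (n : nat) (x : R) :
  0 <= x -> INR n * x <= 1 -> (1 + x) ^ n <= 1 + INR n * x + (INR n * x) ^ 2.
Proof.
  revert x; induction n as [|n IH]; intros x hx hnx.
  - simpl; lra.
  - rewrite S_INR in hnx |- *.
    assert (hn0 : 0 <= INR n) by apply pos_INR.
    assert (IHx := IH x hx ltac:(nra)).
    assert (hstep : (1 + x) * (1 + x) ^ n
                    <= (1 + x) * (1 + INR n * x + (INR n * x) ^ 2))
      by (apply Rmult_le_compat_l; lra).
    simpl pow in hstep |- *.
    (* the surplus term n^2 x^3 is dominated by (n + 1) x^2 because n x <= 1 *)
    assert (INR n * INR n * x * x * x <= (INR n + 1) * x * x) by nra.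
    nra.
Qed.

Lemma two_pow_ge (n : nat) : (2 <= n)%nat -> 2 * INR n <= 2 ^ n.
Proof.
  induction 1 as [|n hn IH].
  - simpl; lra.
  - rewrite S_INR; simpl pow.
    assert (1 <= 2 ^ n) by (apply pow_R1_Rle; lra).
    assert (2 <= INR n) by (apply (le_INR 2); lia).
    lra.
Qed.

Lemma shifted_power_le (n : nat) (m a : R) :
  1 <= m -> 0 < a -> 2 * INR n * m <= a -> m * (1 + a) ^ n <= (m + 3 / 4) * a ^ n.
Proof.
  intros hm ha hnm.
  set (x := / a).
  assert (hx : 0 < x) by (apply Rinv_0_lt_compat; exact ha).
  assert (hfactor : (1 + a) ^ n = a ^ n * (1 + x) ^ n).
  { rewrite <- Rpow_mult_distr; f_equal; unfold x; field; lra. }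
  assert (hnxm : INR n * x * m <= 1 / 2).
  { assert (INR n * x * m * a = INR n * m) by (unfold x; field; lra).
    assert (0 <= INR n) by apply pos_INR.
    nra. }
  assert (hnx : 0 <= INR n * x) by (apply Rmult_le_pos; [apply pos_INR | lra]).
  assert (hbern := pow_one_plus_le n x (Rlt_le _ _ hx) ltac:(nra)).
  assert (hsq : (INR n * x) ^ 2 * m <= 1 / 4) by nra.
  assert (hbound : m * (1 + x) ^ n <= m + 3 / 4) by nra.
  assert (han : 0 < a ^ n) by (apply pow_lt; exact ha).
  rewrite hfactor; nra.
Qed.

Lemma key_estimate (n : nat) (m K : R) :
  (2 <= n)%nat -> 1 <= m -> K <= m ^ n ->
  (m + 1) * (2 ^ n * m) ^ n - (K - m) - m * (1 + 2 ^ n * m) ^ n > 0.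
Proof.
  intros hn hm hK.
  set (a := 2 ^ n * m).
  assert (h2n := two_pow_ge n hn).
  assert (ha : 2 * INR n * m <= a) by (unfold a; nra).
  assert (hn0 : 0 < INR n) by (apply lt_0_INR; lia).
  assert (hshift := shifted_power_le n m a hm ltac:(nra) ha).
  assert (hmn : 0 < m ^ n) by (apply pow_lt; lra).
  (* a^n = 2^(n n) m^n >= 4 m^n *)
  assert (hfour : 4 * m ^ n <= a ^ n).
  { unfold a; rewrite Rpow_mult_distr, <- pow_mult.
    assert (2 ^ 2 <= 2 ^ (n * n)) by (apply Rle_pow; [lra | nia]).
    simpl in *; nra. }
  lra.
Qed.

Lemma root_le_base (n : nat) (K m : R) :
  (0 < n)%nat -> 1 <= K -> Rpower K (/ INR n) <= m -> K <= m ^ n /\ 1 <= m.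
Proof.
  intros hn hK hroot.
  assert (hnR : 0 < INR n) by (apply lt_0_INR; exact hn).
  assert (hpos : 0 < Rpower K (/ INR n)) by apply exp_pos.
  split.
  - assert (hpow : Rpower K (/ INR n) ^ n = K).
    { rewrite <- Rpower_pow by exact hpos.
      rewrite Rpower_mult, Rinv_l by lra.
      apply Rpower_1; lra. }
    rewrite <- hpow; apply pow_incr; lra.
  - assert (Rpower K 0 <= Rpower K (/ INR n))
      by (apply Rle_Rpower; [exact hK | left; apply Rinv_0_lt_compat; exact hnR]).
    rewrite Rpower_O in * by lra; lra.
Qed.

Lemma neg_near (f : R -> R) (z : R) :
  continuity_pt f z -> f z < 0 -> exists d, 0 < d /\ forall y, Rabs (y - z) < d -> f y < 0.
Proof.
  intros hc hz.
  destruct (hc (- f z) ltac:(lra)) as [d [hd hnear]].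
  exists d; split; [exact hd |]; intros y hy.
  destruct (Req_dec y z) as [-> | hyz]; [exact hz |].
  specialize (hnear y (conj (conj I (not_eq_sym hyz)) hy)).
  simpl in hnear; unfold R_dist in hnear.
  apply Rabs_def2 in hnear; lra.
Qed.

Section FirstRoot.

Variables (f : R -> R) (A : R).
Hypotheses (hcont : continuity f) (hf0 : f 0 < 0) (hA : 0 < A) (hfA : 0 < f A).

Definition neg_prefix (x : R) : Prop :=
  0 <= x <= A /\ forall y, 0 <= y <= x -> f y < 0.

Lemma neg_prefix_bound : bound neg_prefix.
Proof. exists A; intros x [hx _]; lra. Qed.

Lemma neg_prefix_0 : neg_prefix 0.
Proof.
  split; [lra |]; intros y hy.
  replace y with 0 by lra; exact hf0.
Qed.

Lemma neg_prefix_sup_root (r : R) :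
  is_lub neg_prefix r -> 0 < r < A /\ f r = 0 /\ forall y, 0 <= y < r -> f y < 0.
Proof.
  intros [hub hlub].
  assert (hr0 : 0 <= r) by (apply hub, neg_prefix_0).
  assert (hrA : r <= A) by (apply hlub; intros x [hx _]; lra).
  assert (hbelow : forall y, 0 <= y < r -> f y < 0).
  { intros y hy.
    destruct (classic (exists x, neg_prefix x /\ y <= x)) as [[x [[_ hx] hyx]] | hnone].
    - apply hx; lra.
    - exfalso.
      assert (r <= y); [| lra].
      apply hlub; intros x hx.
      destruct (Rle_or_lt x y) as [hxy | hyx]; [exact hxy |].
      exfalso; apply hnone; exists x; split; [exact hx | lra]. }
  (* f r < 0 would let the negative prefix extend beyond r *)
  assert (hnot_neg : ~ f r < 0).
  { intros hr.
    destruct (neg_near f r (hcont r) hr) as [d [hd hnear]].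
    assert (hrA' : r < A) by (destruct (Req_dec r A) as [-> | ]; lra).
    set (b := Rmin (r + d / 2) A).
    assert (hb : neg_prefix b).
    { assert (Rmin (r + d / 2) A <= r + d / 2) by apply Rmin_l.
      assert (Rmin (r + d / 2) A <= A) by apply Rmin_r.
      assert (r < Rmin (r + d / 2) A) by (apply Rmin_glb_lt; lra).
      split; [unfold b; lra |].
      intros y hy; destruct (Rlt_or_le y r).
      - apply hbelow; lra.
      - apply hnear; unfold b in hy; rewrite Rabs_right; lra. }
    assert (b <= r) by (apply hub; exact hb).
    assert (r < b) by (apply Rmin_glb_lt; lra).
    lra. }
  (* f r > 0 would make f positive just below r, contradicting hbelow *)
  assert (hnot_pos : ~ 0 < f r).
  { intros hr.
    assert (hcneg : continuity_pt (fun x => - f x) r)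
      by (apply continuity_pt_opp; apply hcont).
    destruct (neg_near (fun x => - f x) r hcneg ltac:(lra)) as [d [hd hnear]].
    assert (hr0' : 0 < r) by (destruct (Req_dec r 0) as [-> | ]; lra).
    set (y := Rmax 0 (r - d / 2)).
    assert (0 <= Rmax 0 (r - d / 2)) by apply Rmax_l.
    assert (r - d / 2 <= Rmax 0 (r - d / 2)) by apply Rmax_r.
    assert (Rmax 0 (r - d / 2) < r) by (apply Rmax_lub_lt; lra).
    assert (hfy := hbelow y ltac:(unfold y; lra)).
    assert (- f y < 0) by (apply hnear; unfold y; rewrite Rabs_left; lra).
    lra. }
  assert (hroot : f r = 0) by lra.
  split; [| split; [exact hroot | exact hbelow]].
  split.
  - destruct (Req_dec r 0) as [-> | ]; lra.
  - destruct (Req_dec r A) as [-> | ]; lra.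
Qed.

Lemma first_root_below : exists r, smallest_pos_root f r /\ r < A.
Proof.
  destruct (completeness neg_prefix neg_prefix_bound (ex_intro _ 0 neg_prefix_0))
    as [r hlub].
  destruct (neg_prefix_sup_root r hlub) as [[hr0 hrA] [hroot hbelow]].
  exists r; split; [| exact hrA].
  split; [exact hr0 | split; [exact hroot |]].
  intros b hb hfb.
  destruct (Rlt_or_le b r) as [hbr | hrb]; [| exact hrb].
  specialize (hbelow b (conj (Rlt_le _ _ hb) hbr)); lra.
Qed.

End FirstRoot.

Lemma g_continuous (p k j : nat) : continuity (g p k j).
Proof. unfold g; reg. Qed.

Lemma g_at_0 (p k j : nat) : (1 <= p - 1)%nat -> g p k j 0 = - INR k.
Proof.
  intros hp; unfold g.
  rewrite pow_i by lia; rewrite Rplus_0_r, pow1; ring.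
Qed.

Theorem mainTheorem8 (p k j : nat) (hp : (3 <= p)%nat) (hk : (1 <= k)%nat)
  (hj1 : Rpower (INR k) (/ INR (p - 1)) + 1 <= INR j) (hj2 : (j <= k)%nat) :
  g p k j (Q p * (INR j - 1)) > 0 /\
  exists a, smallest_pos_root (g p k j) a /\ a < Q p * (INR j - 1).
Proof.
  assert (hk1 : 1 <= INR k) by (apply (le_INR 1); lia).
  destruct (root_le_base (p - 1) (INR k) (INR j - 1) ltac:(lia) hk1 ltac:(lra))
    as [hkm hm].
  assert (hg : g p k j (Q p * (INR j - 1)) =
               (INR j - 1 + 1) * (2 ^ (p - 1) * (INR j - 1)) ^ (p - 1)
               - (INR k - (INR j - 1))
               - (INR j - 1) * (1 + 2 ^ (p - 1) * (INR j - 1)) ^ (p - 1))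
    by (unfold g, Q; ring).
  assert (hpos : g p k j (Q p * (INR j - 1)) > 0)
    by (rewrite hg; apply key_estimate; [lia | exact hm | exact hkm]).
  split; [exact hpos |].
  apply first_root_below.
  - apply g_continuous.
  - rewrite g_at_0 by lia; lra.
  - unfold Q; assert (0 < 2 ^ (p - 1)) by (apply pow_lt; lra); nra.
  - exact hpos.
Qed.
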